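(* Let $p\in\mathbb R^I$ be a probability vector with positive entries, and for $i\in\mathcal I$ define $$R_i:=\frac{\sum_{j\in\mathcal J}\mathfrak d(i,j)\theta_j-\sum_{\ell\in\mathcal I}\mathfrak d(i,\ell)\hat\lambda_\ell}{p_i}.$$ If $\vartheta_p\neq0$, then all $R_i$ are nonzero and $\dfrac1{\vartheta_p}=\sum_{i\in\mathcal I}\dfrac1{R_i}$.
   Context: Network and parameters: $\mathcal I=\{1,\dots,I\}$ (customer classes), $\mathcal J=\{1,\dots,J\}$ (server pools), and $\mathcal E\subset\mathcal I\times\mathcal J$ is a set of edges such that the bipartite graph $\mathcal G=(\mathcal I\cup\mathcal J,\mathcal E)$ is a tree. Write $i\sim j$ iff $(i,j)\in\mathcal E$, $\mathcal J(i)=\{j:i\sim j\}$, $\mathcal I(j)=\{i:i\sim j\}$. $\mathbb R^{\mathcal G}$ denotes the arrays $[\xi_{ij}]\in\mathbb R^{I\times J}$ with $\xi_{ij}=0$ whenever $i\not\sim j$, and $\mathbb R^{\mathcal G}_+$ its elements with nonnegative entries. For each $n\in\mathbb N$ there are arrival rates $\lambda^n_i>0$, service rates $\mu^n_{ij}>0$ ($i\sim j$) and pool sizes $N^n_j\in\mathbb N$, such that as $n\to\infty$: $\lambda^n_i/n\to\lambda_i>0$, $N^n_j/n\to\nu_j>0$, $\mu^n_{ij}\to\mu_{ij}>0$, $\hat\lambda^n_i:=(\lambda^n_i-n\lambda_i)/\sqrt n\to\hat\lambda_i\in\mathbb R$, $\hat\mu^n_{ij}:=\sqrt n(\mu^n_{ij}-\mu_{ij})\to\hat\mu_{ij}\in\mathbb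 R$, $\hat\nu^n_j:=\sqrt n(N^n_j/n-\nu_j)\to\hat\nu_j\in\mathbb R$. Complete resource pooling is assumed: the linear program ''minimize $\max_{j}\sum_i\xi_{ij}$ over $\xi\in\mathbb R^{\mathcal G}_+$ subject to $\sum_j\mu_{ij}\nu_j\xi_{ij}=\lambda_i$ for all $i$'' has a unique solution $\xi^*$, and it satisfies $\sum_{i}\xi^*_{ij}=1$ for all $j$ and $\xi^*_{ij}>0$ for all $i\sim j$. Put $z^*_{ij}:=\xi^*_{ij}\nu_j$ and $\theta_j:=\hat\nu_j+\sum_{i\in\mathcal I(j)}(\hat\mu_{ij}/\mu_{ij})z^*_{ij}$. SWSS parameter: for a probability vector $p\in\mathbb R^I$ with positive entries, $\vartheta_p$ is the (unique) optimal value of the linear program: maximize $\vartheta$ over $(\vartheta,\kappa)\in\mathbb R\times\mathbb R^{\mathcal G}$ subject to $\hat\lambda_i\le\sum_{j\in\mathcal J(i)}\mu_{ij}\kappa_{ij}-\vartheta p_i$ for all $i\in\mathcal I$ and $\sum_{i\in\mathcal I(j)}\kappa_{ij}=\theta_j$ for all $j\in\mathcal J$. Gains: for $i\in\mathcal I$, $j\in\mathcal J$, let $(i_1,j_1,i_2,j_2,\dots,i_m,j_m)$ be the unique shortest path in $\mathcal G$ from $i=i_1$ to $j=j_m$, and set $\mathfrak d(i,j):=\mu_{i_1j_1}\prod_{k=1}^{m-1}\mu_{i_{k+1}j_{k+1}}/\mu_{i_{k+1}j_k}$. For $i\ne i'$ in $\mathcal I$ with shortest path $(i_1,j_1,\dots,j_{m-1},i_m)$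 from $i=i_1$ to $i'=i_m$, set $\mathfrak d(i,i'):=\prod_{k=1}^{m-1}\mu_{i_kj_k}/\mu_{i_{k+1}j_k}$; and $\mathfrak d(i,i):=1$. *)

From HB Require Import structures.
From mathcomp Require Import all_boot all_order all_algebra.
From mathcomp Require Import all_classical all_reals all_analysis.
From Stdlib Require Import ClassicalEpsilon.
Set Implicit Arguments. Unset Strict Implicit. Unset Printing Implicit Defensive.
Import Order.TTheory GRing.Theory Num.Theory.
Import numFieldNormedType.Exports.
Local Open Scope ring_scope.

Section ParallelServerDefs.
Variables (R : realType) (nI nJ : nat).
(* customer classes are 'I_nI, server pools are 'I_nJ;
   the edge set is given by E : 'I_nI -> 'I_nJ -> bool (i ~ j iff E i j) *)

Definition tg_adj (E : 'I_nI -> 'I_nJ -> bool) : rel ('I_nI + 'I_nJ) :=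
  fun u v => match u, v with
             | inl i, inr j => E i j
             | inr j, inl i => E i j
             | _, _ => false
             end.

Definition is_tree (E : 'I_nI -> 'I_nJ -> bool) : Prop :=
  (forall u v, connect (tg_adj E) u v) /\
  (#|[set e : 'I_nI * 'I_nJ | E e.1 e.2]| + 1 = nI + nJ)%N.

Definition in_RG (E : 'I_nI -> 'I_nJ -> bool) (x : 'I_nI -> 'I_nJ -> R) : Prop :=
  forall i j, ~~ E i j -> x i j = 0.

Definition crp_feasible E (mu : 'I_nI -> 'I_nJ -> R) (nu : 'I_nJ -> R)
  (lam : 'I_nI -> R) (xi : 'I_nI -> 'I_nJ -> R) : Prop :=
  [/\ in_RG E xi, (forall i j, 0 <= xi i j) &
      forall i, \sum_(j | E i j) mu i j * nu j * xi i j = lam i].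

(* objective max_j sum_i xi_ij (nonnegative for feasible xi) *)
Definition crp_obj (xi : 'I_nI -> 'I_nJ -> R) : R :=
  \big[Num.max/0]_(j : 'I_nJ) \sum_(i : 'I_nI) xi i j.

Definition crp_unique_solution E mu nu lam (xis : 'I_nI -> 'I_nJ -> R) : Prop :=
  [/\ crp_feasible E mu nu lam xis,
      (forall xi, crp_feasible E mu nu lam xi -> crp_obj xis <= crp_obj xi) &
      (forall xi, crp_feasible E mu nu lam xi -> crp_obj xi <= crp_obj xis ->
                  forall i j, xi i j = xis i j)].

(* theta_j = nuhat_j + sum_{i in I(j)} (muhat_ij / mu_ij) z*_ij, z*_ij = xi*_ij nu_j *)
Definition theta E (mu muhat : 'I_nI -> 'I_nJ -> R) (nu nuhat : 'I_nJ -> R)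
  (xis : 'I_nI -> 'I_nJ -> R) (j : 'I_nJ) : R :=
  nuhat j + \sum_(i | E i j) (muhat i j / mu i j) * (xis i j * nu j).

Definition swss_feasible E (mu : 'I_nI -> 'I_nJ -> R) (lamhat : 'I_nI -> R)
  (th : 'I_nJ -> R) (p : 'I_nI -> R) (vt : R) (kap : 'I_nI -> 'I_nJ -> R) : Prop :=
  [/\ in_RG E kap,
      (forall i, lamhat i <= \sum_(j | E i j) mu i j * kap i j - vt * p i) &
      (forall j, \sum_(i | E i j) kap i j = th j)].

Definition swss_optimal_value E mu lamhat th p (v : R) : Prop :=
  (exists kap, swss_feasible E mu lamhat th p v kap) /\
  (forall vt kap, swss_feasible E mu lamhat th p vt kap -> vt <= v).

(* A path (i_1, j_1, i_2, j_2, ..., i_m, j_m) from class i to pool j,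
   encoded as the nonempty sequence [:: (i_1,j_1); ...; (i_m,j_m)]. *)
Definition ij_path E (i : 'I_nI) (j : 'I_nJ) (s : seq ('I_nI * 'I_nJ)) : Prop :=
  if s is x :: _ then
    [/\ x.1 = i, (last x s).2 = j, all (fun e => E e.1 e.2) s &
        forall k, (k.+1 < size s)%N -> E (nth x s k.+1).1 (nth x s k).2]
  else False.

Definition ij_path_shortest E i j s : Prop :=
  ij_path E i j s /\ forall s', ij_path E i j s' -> (size s <= size s')%N.

Definition ij_path_gain (mu : 'I_nI -> 'I_nJ -> R) (s : seq ('I_nI * 'I_nJ)) : R :=
  if s is x :: _ then
    mu x.1 x.2 * \prod_(k < (size s).-1)
      (mu (nth x s k.+1).1 (nth x s k.+1).2 / mu (nth x s k.+1).1 (nth x s k).2)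
  else 0.

(* d(i,j), computed along the (unique) shortest path from i to j *)
Definition gainIJ E mu (i : 'I_nI) (j : 'I_nJ) : R :=
  epsilon (inhabits 0)
    (fun g => exists s, ij_path_shortest E i j s /\ g = ij_path_gain mu s).

(* A path (i_1, j_1, i_2, ..., j_{m-1}, i_m) between classes, encoded as the
   sequence of steps [:: (i_1,j_1,i_2); (i_2,j_2,i_3); ...; (i_{m-1},j_{m-1},i_m)]. *)
Fixpoint ii_path E (i i' : 'I_nI) (s : seq ('I_nI * 'I_nJ * 'I_nI)) : bool :=
  match s with
  | [::] => i == i'
  | st :: t => [&& st.1.1 == i, E st.1.1 st.1.2, E st.2 st.1.2 & ii_path E st.2 i' t]
  end.

Definition ii_path_shortest E i i' s : Prop :=
  ii_path E i i' s /\ forall s', ii_path E i i' s' -> (size s <= size s')%N.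

Definition ii_path_gain (mu : 'I_nI -> 'I_nJ -> R) (s : seq ('I_nI * 'I_nJ * 'I_nI)) : R :=
  \prod_(st <- s) (mu st.1.1 st.1.2 / mu st.2 st.1.2).

Definition gainII E mu (i i' : 'I_nI) : R :=
  if i == i' then 1 else
  epsilon (inhabits 0)
    (fun g => exists s, ii_path_shortest E i i' s /\ g = ii_path_gain mu s).

End ParallelServerDefs.

(* The proof is linear algebra on the bipartite tree G.  Call a pair of node
   weights (w, u) on classes and pools "balanced" when u_j = w_i mu_ij on every
   edge.  Three facts carry the argument:
   - the balanced pairs are exactly the cokernel columns of the edge/node
     incidence matrix; hence (y, t) is realizable as
     (sum_j mu_ij kap_ij, sum_i kap_ij) by an edge array kap iff it is
     orthogonal to all balanced pairs;
   - on a connected graph a balanced pair is fixed by its value at one class,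
     so it is strictly positive as soon as that value is; the SWSS linear
     program being bounded forces a nonzero (hence, after scaling, positive)
     balanced pair (w, u) spanning them all;
   - along any path the gains telescope: d(i,j) = u_j / w_i, d(i,l) = w_l / w_i.
   Weighting the SWSS constraints by w gives the optimal value
   vp = N / P with N = sum_j theta_j u_j - sum_i lamhat_i w_i and
   P = sum_i p_i w_i, while the telescoped gains give R_i = N / (p_i w_i);
   hence 1 / vp = P / N = sum_i 1 / R_i. *)

From HB Require Import structures.
From mathcomp Require Import all_boot all_order all_algebra.
From mathcomp Require Import all_classical all_reals all_analysis.
From Stdlib Require Import ClassicalEpsilon.
From mathcomp Require Import ring lra.
Import Order.TTheory GRing.Theory Num.Theory.
Import numFieldNormedType.Exports.
Local Open Scope ring_scope.

Lemma connect_backward {T : finType} {e : rel T} (Q : T -> Prop) :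
  (forall a b, e a b -> Q b -> Q a) -> forall a b, connect e a b -> Q b -> Q a.
Proof.
move=> eQ a b /connectP [s pth ->]; elim: s a pth => [|y s IH] a //= /andP[eay ps] Qb.
exact: eQ _ _ eay (IH _ ps Qb).
Qed.

Lemma ex_minsize {T : Type} {P : seq T -> Prop} :
  (exists s, P s) -> exists s, P s /\ forall s', P s' -> (size s <= size s')%N.
Proof.
move=> [s0 Ps0]; apply: NNPP => nomin.
suff lb n s : P s -> (n <= size s)%N by have := lb (size s0).+1 s0 Ps0; rewrite ltnn.
elim: n s => [//|n IH] s Ps; rewrite ltn_neqAle IH // andbT; apply/eqP => En.
by apply: nomin; exists s; split => // s' Ps'; rewrite -En; exact: IH.
Qed.

Lemma sum_indicator (R : nzRingType) n (i : 'I_n) (F : 'I_n -> R) :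
  \sum_(k < n) (k == i)%:R * F k = F i.
Proof.
rewrite (bigD1 i) //= eqxx mul1r big1 ?addr0 // => k /negbTE ->; by rewrite mul0r.
Qed.

Lemma split_lshift m n (i : 'I_m) : fintype.split (lshift n i) = inl i.
Proof. exact: (unsplitK (inl _ i)). Qed.

Lemma split_rshift m n (j : 'I_n) : fintype.split (rshift m j) = inr j.
Proof. exact: (unsplitK (inr _ j)). Qed.

Section Network.
Set Implicit Arguments. Unset Strict Implicit.
Variables (R : realType) (nI nJ : nat) (E : 'I_nI -> 'I_nJ -> bool)
  (mu : 'I_nI -> 'I_nJ -> R).

Definition balanced (w : 'I_nI -> R) (u : 'I_nJ -> R) : Prop :=
  forall i j, E i j -> u j = w i * mu i j.

Definition realizable (y : 'I_nI -> R) (t : 'I_nJ -> R) : Prop :=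
  exists kap, [/\ in_RG E kap, forall i, \sum_(j | E i j) mu i j * kap i j = y i &
                 forall j, \sum_(i | E i j) kap i j = t j].

(* Rows: pairs (i, j); on an edge the row is mu_ij e_i + e_j, otherwise 0.
   Its row space is the set of realizable pairs (y, t). *)
Definition incidence_mx : 'M[R]_(#|{: 'I_nI * 'I_nJ}|, nI + nJ) :=
  \matrix_(k, c) (let e := enum_val k in
     if E e.1 e.2 then
       match fintype.split c with inl i => (i == e.1)%:R * mu e.1 e.2
                                | inr j => (j == e.2)%:R end
     else 0).

Definition coker_w (c : 'I_(nI + nJ)) (i : 'I_nI) : R :=
  cokermx incidence_mx (lshift nJ i) c.
Definition coker_u (c : 'I_(nI + nJ)) (j : 'I_nJ) : R :=
  - cokermx incidence_mx (rshift nI j) c.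

Lemma sum_edge_index (a : 'I_#|{: 'I_nI * 'I_nJ}| -> R) (G : 'I_nI * 'I_nJ -> R) :
  \sum_k a k * G (enum_val k) = \sum_i \sum_j a (enum_rank (i, j)) * G (i, j).
Proof.
pose F e := a (enum_rank e) * G e.
transitivity (\sum_(k < #|{: 'I_nI * 'I_nJ}|) F (enum_val k)).
  by apply: eq_bigr => k _; rewrite /F enum_valK.
by rewrite -(big_enum_val (A := predT) F) pair_bigA; apply: eq_big => -[].
Qed.

Lemma coker_balanced c : balanced (coker_w c) (coker_u c).
Proof.
move=> i j Eij; rewrite /coker_u /coker_w.
have /matrixP/(_ (enum_rank (i, j)) c) := mulmx_coker incidence_mx.
rewrite mxE [RHS]mxE big_split_ord /=.
under eq_bigr do rewrite mxE enum_rankK /= Eij split_lshift -mulrA.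
under [X in _ + X = _]eq_bigr do rewrite mxE enum_rankK /= Eij split_rshift.
rewrite !sum_indicator.
by move/eqP; rewrite addr_eq0 => /eqP <-; rewrite mulrC.
Qed.

Lemma realizable_of_coker_orth y t :
  (forall c, \sum_i y i * coker_w c i = \sum_j t j * coker_u c j) -> realizable y t.
Proof.
move=> orth.
pose x : 'rV[R]_(nI + nJ) :=
  \row_c match fintype.split c with inl i => y i | inr j => t j end.
have /submxP [D xD] : (x <= incidence_mx)%MS.
  rewrite submxE; apply/eqP/matrixP => a c; rewrite !mxE big_split_ord /=.
  under eq_bigr do rewrite mxE split_lshift.
  under [X in _ + X = _]eq_bigr do rewrite mxE split_rshift.
  by rewrite orth -big_split big1 // => j _ /=; rewrite /coker_u mulrN addNr.
have entry c : match fintype.split c with inl i => y i | inr j => t j end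
    = \sum_k D 0 k * incidence_mx k c.
  by have := congr1 (fun M : 'rV[R]_(nI + nJ) => M 0 c) xD; rewrite /= !mxE.
exists (fun i j => if E i j then D 0 (enum_rank (i, j)) else 0); split.
- by move=> i j /negbTE ->.
- move=> i; have := entry (lshift nJ i); rewrite split_lshift => ->.
  under [RHS]eq_bigr do rewrite /incidence_mx mxE split_lshift.
  rewrite (sum_edge_index (D 0)
    (fun e => if E e.1 e.2 then (i == e.1)%:R * mu e.1 e.2 else 0)) /=.
  rewrite [RHS](bigD1 i) //= [X in _ = _ + X]big1 => [|i' ne]; last first.
    by apply: big1 => j _; case: (E i' j); rewrite ?mulr0 // eq_sym (negbTE ne) mul0r mulr0.
  rewrite addr0 big_mkcond /=; apply: eq_bigr => j _.
  by case: (E i j); rewrite ?eqxx ?mul1r ?mulr0 // mulrC.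
- move=> j; have := entry (rshift nI j); rewrite split_rshift => ->.
  under [RHS]eq_bigr do rewrite /incidence_mx mxE split_rshift.
  rewrite (sum_edge_index (D 0) (fun e => if E e.1 e.2 then (j == e.2)%:R else 0)).
  rewrite /= big_mkcond /=; apply: eq_bigr => i _.
  rewrite [RHS](bigD1 j) //= [X in _ = _ + X]big1 => [|j' ne]; last first.
    by case: (E i j'); rewrite ?mulr0 // eq_sym (negbTE ne) mulr0.
  by rewrite addr0; case: (E i j); rewrite ?eqxx ?mulr1 ?mulr0.
Qed.

Section Connected.
Hypothesis mu_pos : forall i j, E i j -> 0 < mu i j.
Hypothesis connected : forall a b, connect (tg_adj E) a b.

Definition potential (w : 'I_nI -> R) (u : 'I_nJ -> R) (v : 'I_nI + 'I_nJ) : R :=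
  match v with inl i => w i | inr j => u j end.

Lemma balanced_adj w u a b : balanced w u -> tg_adj E a b ->
  ((potential w u a == 0) = (potential w u b == 0)) /\
  ((0 < potential w u a) = (0 < potential w u b)).
Proof.
move=> bal; case: a => [i|j]; case: b => [i'|j'] //= Eij;
  rewrite (bal _ _ Eij) mulf_eq0 (negbTE (lt0r_neq0 (mu_pos Eij))) orbF
          pmulr_lgt0 //; exact: mu_pos.
Qed.

Lemma balanced_zero w u i0 : balanced w u -> w i0 = 0 ->
  (forall i, w i = 0) /\ (forall j, u j = 0).
Proof.
move=> bal w0.
have zero v : potential w u v == 0.
  have closed0 : closed_mem (tg_adj E) (mem [pred v | potential w u v == 0]).
    by move=> a b /(balanced_adj bal) [].
  by have := closed_connect closed0 (connected (inl i0) v); rewrite !inE /= w0 eqxx => <-.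
by split => [i|j]; apply/eqP; [exact: (zero (inl i)) | exact: (zero (inr j))].
Qed.

Lemma balanced_pos w u i0 : balanced w u -> 0 < w i0 ->
  (forall i, 0 < w i) /\ (forall j, 0 < u j).
Proof.
move=> bal w0.
have pos v : 0 < potential w u v.
  have closed_pos : closed_mem (tg_adj E) (mem [pred v | 0 < potential w u v]).
    by move=> a b /(balanced_adj bal) [].
  by have := closed_connect closed_pos (connected (inl i0) v); rewrite !inE /= w0 => <-.
by split => [i|j]; [exact: (pos (inl i)) | exact: (pos (inr j))].
Qed.

Lemma balanced_proportional w u w' u' i0 : balanced w u -> balanced w' u' -> w i0 != 0 ->
  let a := w' i0 / w i0 in (forall i, w' i = a * w i) /\ (forall j, u' j = a * u j).
Proof.
move=> bal bal' nz a.
have bal_diff : balanced (fun i => w' i - a * w i) (fun j => u' j - a * u j).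
  by move=> i j Eij; rewrite (bal _ _ Eij) (bal' _ _ Eij); ring.
have [|wd ud] := balanced_zero (i0 := i0) bal_diff; first by rewrite mulfVK // subrr.
by split => [i|j]; apply/eqP; rewrite -subr_eq0; apply/eqP.
Qed.

Lemma potential_basis (i0 : 'I_nI) : (exists y t, ~ realizable y t) ->
  exists w u, [/\ balanced w u, forall i, 0 < w i, forall j, 0 < u j &
    forall y t, \sum_i y i * w i = \sum_j t j * u j -> realizable y t].
Proof.
move=> [y0 [t0 not_real]].
have [c wc_nz] : exists c, coker_w c i0 != 0.
  apply: NNPP => all0; apply: not_real; apply: realizable_of_coker_orth => c.
  have [|w0 u0] := balanced_zero (i0 := i0) (coker_balanced c).
    by apply: NNPP => nz; apply: all0; exists c; apply/eqP.
  by rewrite !big1 // => k _; rewrite ?w0 ?u0 mulr0.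
pose w i := coker_w c i / coker_w c i0; pose u j := coker_u c j / coker_w c i0.
have bal : balanced w u by move=> i j Eij; rewrite /u /w (coker_balanced c Eij) mulrAC.
have w0_pos : 0 < w i0 by rewrite /w divff // ltr01.
have [w_pos u_pos] := balanced_pos bal w0_pos.
exists w, u; split => // y t orth; apply: realizable_of_coker_orth => c'.
have [wc' uc'] := balanced_proportional bal (coker_balanced c') (lt0r_neq0 (w_pos i0)).
under eq_bigr do rewrite wc' mulrCA.
under [RHS]eq_bigr do rewrite uc' mulrCA.
by rewrite -!mulr_sumr orth.
Qed.

Lemma ij_path_cons i j x y t :
  ij_path E i j [:: x, y & t] <->
  [/\ x.1 = i, E x.1 x.2, E y.1 x.2 & ij_path E y.1 j (y :: t)].
Proof.
split.
- case=> x1 xl /= /andP[Ex Ayt] adj; split => //; first exact: (adj 0%N).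
  split => // k lt; move: (adj k.+1 lt) => /=.
  by rewrite !(set_nth_default y x) // ltnW.
- case=> x1 Ex Eyx [_ yl Ayt adj]; split => //=; first by rewrite Ex.
  case=> [|k] //= lt; rewrite !(set_nth_default y x) ?adj //; exact: ltnW.
Qed.

Lemma ij_path_exists i j : exists s, ij_path E i j s.
Proof.
pose Q v := match v with
  | inl i1 => exists s, ij_path E i1 j s
  | inr j1 => j1 = j \/ exists i2 s, E i2 j1 /\ ij_path E i2 j s end.
apply: (connect_backward Q _ _ _ (connected (inl i) (inr j))); last by left.
move=> [i1|j1] [i2|j2] //= e.
- case=> [<-|[i3 [[|y t] [E3 P3]]]] //.
    by exists [:: (i1, j2)]; split => //=; rewrite e.
  exists [:: (i1, j2), y & t]; apply/ij_path_cons; case: P3 => y1 ? ? ?.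
  by split => //; rewrite y1.
- by move=> [s P]; right; exists i2, s.
Qed.

Lemma ii_path_exists i i' : exists s, ii_path E i i' s.
Proof.
pose Q v := match v with
  | inl i1 => exists s, ii_path E i1 i' s
  | inr j1 => exists i2 s, E i2 j1 /\ ii_path E i2 i' s end.
apply: (connect_backward Q _ _ _ (connected (inl i) (inl i'))); last by exists [::] => /=.
move=> [i1|j1] [i2|j2] //= e.
- by move=> [i3 [s [E3 P3]]]; exists ((i1, j2, i3) :: s) => /=; rewrite eqxx e E3 P3.
- by move=> [s P]; exists i2, s.
Qed.

Lemma ij_path_gain_cons x y t :
  ij_path_gain mu [:: x, y & t] = mu x.1 x.2 / mu y.1 x.2 * ij_path_gain mu (y :: t).
Proof.
rewrite /ij_path_gain /= big_ord_recl /= mulrA [in RHS]mulrA; congr (_ * _).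
  by rewrite mulrA mulrAC.
apply: eq_bigr => k _; rewrite add0n.
by rewrite !(set_nth_default y x) //= ?ltnS ltnW.
Qed.

Section Gains.
Variables (w : 'I_nI -> R) (u : 'I_nJ -> R).
Hypotheses (bal : balanced w u) (w_pos : forall i, 0 < w i) (u_pos : forall j, 0 < u j).

Let w_nz i : w i != 0. Proof. exact: lt0r_neq0. Qed.
Let u_nz j : u j != 0. Proof. exact: lt0r_neq0. Qed.

Lemma mu_balanced i j : E i j -> mu i j = u j / w i.
Proof. by move=> Eij; rewrite (bal Eij) [w i * _]mulrC mulfK. Qed.

Lemma ij_path_gain_balanced i j s : ij_path E i j s -> ij_path_gain mu s = u j / w i.
Proof.
elim: s i => [//|x s IH] i; case: s IH => [|y t] IH.
  by case=> <- <- /= /andP[Ex _] _; rewrite /ij_path_gain /= big_ord0 mulr1 mu_balanced.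
move/ij_path_cons => [<- Ex Eyx Py]; rewrite ij_path_gain_cons (IH _ Py).
by rewrite !mu_balanced //; field; rewrite !w_nz u_nz.
Qed.

Lemma ii_path_gain_balanced i i' s : ii_path E i i' s -> ii_path_gain mu s = w i' / w i.
Proof.
elim: s i => [|st s IH] i /=; first by move=> /eqP ->; rewrite /ii_path_gain big_nil divff.
move=> /and4P[/eqP <- E1 E2 P]; rewrite /ii_path_gain big_cons -/(ii_path_gain mu s).
by rewrite (IH _ P) !mu_balanced //; field; rewrite !w_nz u_nz.
Qed.

Lemma gainIJ_balanced i j : gainIJ E mu i j = u j / w i.
Proof.
rewrite /gainIJ; have [s0 min0] := ex_minsize (ij_path_exists i j).
have [|s [[Ps _] ->]] := epsilon_spec (inhabits (0 : R))
  (fun g => exists s, ij_path_shortest E i j s /\ g = ij_path_gain mu s).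
  by exists (ij_path_gain mu s0), s0.
exact: ij_path_gain_balanced.
Qed.

Lemma gainII_balanced i i' : gainII E mu i i' = w i' / w i.
Proof.
rewrite /gainII; case: eqP => [->|_]; first by rewrite divff.
have [s0 min0] := ex_minsize (ii_path_exists i i').
have [|s [[Ps _] ->]] := epsilon_spec (inhabits (0 : R))
  (fun g => exists s, ii_path_shortest E i i' s /\ g = ii_path_gain mu s).
  by exists (ii_path_gain mu s0), s0.
exact: ii_path_gain_balanced.
Qed.

Lemma gain_balance (t : 'I_nJ -> R) (y : 'I_nI -> R) i :
  \sum_j gainIJ E mu i j * t j - \sum_l gainII E mu i l * y l
  = (\sum_j t j * u j - \sum_l y l * w l) / w i.
Proof.
under eq_bigr do rewrite gainIJ_balanced mulrC mulrA.
under [X in _ - X]eq_bigr do rewrite gainII_balanced mulrC mulrA.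
by rewrite -!mulr_suml mulrBl.
Qed.

End Gains.
End Connected.

Section SWSS.
Variables (lamhat : 'I_nI -> R) (th : 'I_nJ -> R) (p : 'I_nI -> R) (vp : R).
Hypothesis vp_opt : swss_optimal_value E mu lamhat th p vp.

Lemma swss_le_value vt y : realizable y th ->
  (forall i, lamhat i <= y i - vt * p i) -> vt <= vp.
Proof.
move=> [kap [kap_RG kap_y kap_th]] le_y; apply: (vp_opt.2 vt kap).
by split => // i; rewrite kap_y.
Qed.

(* Boundedness: otherwise vp + 1 would be feasible. *)
Lemma swss_unrealizable : exists y t, ~ realizable y t.
Proof.
exists (fun i => lamhat i + (vp + 1) * p i), th => real.
have : vp + 1 <= vp by apply: (swss_le_value real) => i; rewrite addrK.
by rewrite gerDl ler10.
Qed.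

(* Weak duality: weighting the constraints by a nonnegative balanced w bounds vt. *)
Lemma swss_weak_duality w u vt kap : balanced w u -> (forall i, 0 <= w i) ->
  swss_feasible E mu lamhat th p vt kap ->
  vt * \sum_i p i * w i <= \sum_j th j * u j - \sum_i lamhat i * w i.
Proof.
move=> bal w_ge0 [_ feas_i feas_j].
have flow : \sum_i (\sum_(j | E i j) mu i j * kap i j) * w i = \sum_j th j * u j.
  under eq_bigr do rewrite mulr_suml.
  rewrite (exchange_big_dep predT) //=; apply: eq_bigr => j _.
  rewrite -feas_j mulr_suml; apply: eq_bigr => i Eij.
  by rewrite (bal _ _ Eij); ring.
have : \sum_i lamhat i * w i <= \sum_i (\sum_(j | E i j) mu i j * kap i j - vt * p i) * w i.
  by apply: ler_sum => i _; rewrite ler_wpM2r.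
have -> : \sum_i (\sum_(j | E i j) mu i j * kap i j - vt * p i) * w i
         = \sum_j th j * u j - vt * \sum_i p i * w i.
  by rewrite -flow mulr_sumr -sumrB; apply: eq_bigr => i _; rewrite mulrBl mulrA.
lra.
Qed.

Lemma swss_value w u (i0 : 'I_nI) : balanced w u -> (forall i, 0 < w i) ->
  (forall i, 0 < p i) ->
  (forall y t, \sum_i y i * w i = \sum_j t j * u j -> realizable y t) ->
  vp = (\sum_j th j * u j - \sum_i lamhat i * w i) / \sum_i p i * w i.
Proof.
move=> bal w_pos p_pos crit.
set N := _ - _; set P := \sum_i _.
have P_pos : 0 < P.
  have head : 0 < p i0 * w i0 by rewrite mulr_gt0.
  have tail : 0 <= \sum_(i | i != i0) p i * w i.
    by apply: sumr_ge0 => i _; rewrite mulr_ge0 // ltW.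
  rewrite /P (bigD1 i0) //=; lra.
have le_vp : vp <= N / P.
  have [kap feas] := vp_opt.1; rewrite ler_pdivlMr //.
  by apply: swss_weak_duality bal _ feas => i; exact: ltW.
have ge_vp : N / P <= vp.
  apply: (@swss_le_value _ (fun i => lamhat i + N / P * p i)) => [|i]; last by rewrite addrK.
  apply: crit; have -> : \sum_i (lamhat i + N / P * p i) * w i
                       = \sum_i lamhat i * w i + N / P * P.
    by rewrite /P mulr_sumr -big_split; apply: eq_bigr => i _ /=; rewrite mulrDl [in RHS]mulrA.
  by rewrite divfK ?lt0r_neq0 // /N; ring.
by apply/eqP; rewrite eq_le le_vp ge_vp.
Qed.

End SWSS.
End Network.

Local Open Scope classical_set_scope.
Local Open Scope ring_scope.

Theorem corollary1 (R : realType) (nI nJ : nat) (E : 'I_nI -> 'I_nJ -> bool)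
  (lamn : nat -> 'I_nI -> R) (mun : nat -> 'I_nI -> 'I_nJ -> R) (Nn : nat -> 'I_nJ -> nat)
  (lam : 'I_nI -> R) (mu : 'I_nI -> 'I_nJ -> R) (nu : 'I_nJ -> R)
  (lamhat : 'I_nI -> R) (muhat : 'I_nI -> 'I_nJ -> R) (nuhat : 'I_nJ -> R)
  (xis : 'I_nI -> 'I_nJ -> R) (p : 'I_nI -> R) (vp : R) :
  is_tree E ->
  (forall n i, 0 < lamn n i) ->
  (forall n i j, E i j -> 0 < mun n i j) ->
  (forall i, 0 < lam i) -> (forall j, 0 < nu j) -> (forall i j, E i j -> 0 < mu i j) ->
  (forall i, (fun n : nat => lamn n i / n%:R) @ \oo --> lam i) ->
  (forall j, (fun n : nat => (Nn n j)%:R / n%:R) @ \oo --> nu j) ->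
  (forall i j, E i j -> (fun n : nat => mun n i j) @ \oo --> mu i j) ->
  (forall i, (fun n : nat => (lamn n i - n%:R * lam i) / Num.sqrt n%:R) @ \oo --> lamhat i) ->
  (forall i j, E i j ->
     (fun n : nat => Num.sqrt n%:R * (mun n i j - mu i j)) @ \oo --> muhat i j) ->
  (forall j, (fun n : nat => Num.sqrt n%:R * ((Nn n j)%:R / n%:R - nu j)) @ \oo --> nuhat j) ->
  crp_unique_solution E mu nu lam xis ->
  (forall j, \sum_i xis i j = 1) ->
  (forall i j, E i j -> 0 < xis i j) ->
  (forall i, 0 < p i) -> \sum_i p i = 1 ->
  swss_optimal_value E mu lamhat (theta E mu muhat nu nuhat xis) p vp ->
  vp != 0 ->
  let Ri := fun i : 'I_nI =>
    (\sum_(j : 'I_nJ) gainIJ E mu i j * theta E mu muhat nu nuhat xis j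
     - \sum_(l : 'I_nI) gainII E mu i l * lamhat l) / p i in
  (forall i, Ri i != 0) /\ vp^-1 = \sum_(i : 'I_nI) (Ri i)^-1.
Proof.
move=> [connected _] _ _ _ _ mu_pos _ _ _ _ _ _ _ _ _ p_pos p_sum vp_opt vp_nz Ri.
set th := theta E mu muhat nu nuhat xis in vp_opt Ri *.
have [i0 _ | no_class] := pickP (@predT 'I_nI); last first.
  by move: p_sum; rewrite big_pred0 // => /eqP; rewrite eq_sym oner_eq0.
have [w [u [bal w_pos u_pos crit]]] :=
  potential_basis mu_pos connected i0 (swss_unrealizable vp_opt).
have vpE := swss_value vp_opt i0 bal w_pos p_pos crit.
set N := _ - _ in vpE; set P := \sum_i _ in vpE.
have N_nz : N != 0 by apply: contraNneq vp_nz; rewrite vpE => ->; rewrite mul0r.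
have RiE i : Ri i = N / (p i * w i).
  by rewrite /Ri (gain_balance connected bal w_pos u_pos) invfM mulrA mulrAC.
split => [i|]; first by rewrite RiE mulf_neq0 // invr_eq0 mulf_neq0 // lt0r_neq0.
by rewrite vpE invf_div; under eq_bigr do rewrite RiE invf_div; rewrite -mulr_suml.
Qed.
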